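(* Let $X$ be a random vector in $\mathcal{X}\subset\mathbb{R}^d$ with distribution $F$ having a density $f$ with respect to Lebesgue measure $Leb$, and let $\mathcal{G}$ be a class of Borel subsets of $\mathcal{X}$. Assume there is a countable subcollection $\Pi=\{F_i\}_{i\ge1}\subset\mathcal{G}$ forming a partition of $\mathcal{X}$ with $\sigma(\Pi)\subset\mathcal{G}$. Let $\mathcal{F}=\sigma(\Pi)$ and $f_\Pi(x)=\sum_{i\ge1}\mathds{1}_{x\in F_i}\frac{1}{Leb(F_i)}\int_{F_i}f(y)\,dy$. For a class $\mathcal{C}$ of measurable sets define $\textsc{EM}^*_{\mathcal{C}}(t)=\max_{\Omega\in\mathcal{C}}\{F(\Omega)-t\,Leb(\Omega)\}$, and $\textsc{EM}^*(t)=\max_{\Omega\ \text{measurable}}\{F(\Omega)-t\,Leb(\Omega)\}$. Then for every $t\in[0,\|f\|_\infty]$, $$0\le\textsc{EM}^*(t)-\textsc{EM}^*_{\mathcal{F}}(t)\le\|f-f_\Pi\|_{L^1}.$$ Consequently, $\textsc{EM}^*-\textsc{EM}^*_{\mathcal{G}}$ is uniformly bounded on $[0,\|f\|_\infty]$ by $\|f-f_\Pi\|_{L^1}$.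
   Context: $\sigma(\Pi)$ denotes the $\sigma$-algebra generated by $\Pi$; $\|f\|_\infty=\sup_x|f(x)|$. *)

From HB Require Import structures.
From mathcomp Require Import all_boot all_order all_algebra.
From mathcomp Require Import all_classical all_reals all_analysis.
Set Implicit Arguments. Unset Strict Implicit. Unset Printing Implicit Defensive.
Import Order.TTheory GRing.Theory Num.Theory.
Local Open Scope classical_set_scope.
Local Open Scope ring_scope.

(* R^d is modelled as d.-tuple R with its canonical measurable structure
   (the product sigma-algebra of the Borel sets = Borel sets of R^d). *)

(* By uniqueness of measure extension (closed boxes form a pi-system generating
   the Borel sigma-algebra, and R^d is a countable union of boxes of finite
   measure) this characterizes Lebesgue measure on Borel sets uniquely. *)
Definition is_lebesgue_measure {R : realType} (d : nat)
    (leb : set (d.-tuple R) -> \bar R) : Prop :=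
  forall a b : 'I_d -> R, (forall i, a i <= b i) ->
    leb [set x | forall i, a i <= tnth x i <= b i] =
    (\prod_(i < d) (b i - a i))%:E.

Section defs.
Context {R : realType} {d : nat}.
Variable leb : {measure set (d.-tuple R) -> \bar R}.
Local Open Scope ereal_scope.

Definition distr_of (f : d.-tuple R -> R) (A : set (d.-tuple R)) : \bar R :=
  \int[leb]_(x in A) (f x)%:E.

Definition EMstar_class (f : d.-tuple R -> R) (C : set (set (d.-tuple R)))
    (t : R) : \bar R :=
  ereal_sup [set distr_of f Om - t%:E * leb Om | Om in C].

Definition EMstar (X : set (d.-tuple R)) (f : d.-tuple R -> R) (t : R) : \bar R :=
  EMstar_class f [set Om | measurable Om /\ Om `<=` X] t.

Definition f_Pi (f : d.-tuple R -> R) (P : nat -> set (d.-tuple R))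
    (x : d.-tuple R) : \bar R :=
  \sum_(0 <= i <oo) ((\1_(P i) x)%:E * ((leb (P i))^-1 * distr_of f (P i))).

Definition L1_dist (X : set (d.-tuple R)) (f : d.-tuple R -> R)
    (P : nat -> set (d.-tuple R)) : \bar R :=
  \int[leb]_(x in X) `|(f x)%:E - f_Pi f P x|.

Definition sup_norm (X : set (d.-tuple R)) (f : d.-tuple R -> R) : \bar R :=
  ereal_sup [set `|f x|%:E | x in X].

End defs.

From HB Require Import structures.
From mathcomp Require Import all_boot all_order all_algebra.
From mathcomp Require Import all_classical all_reals all_analysis.
From mathcomp Require Import measurable_realfun lra.
Import Order.TTheory GRing.Theory Num.Theory.
Local Open Scope classical_set_scope.
Local Open Scope ring_scope.

(* On a cell B of the partition with average c = F(B)/Leb(B), any measurable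
   Om satisfies F(Om & B) <= c Leb(Om & B) + int_B |f - c|.  Hence replacing
   Om & B by all of B when c > t, and by nothing when c <= t, lowers
   F - t Leb by at most int_B |f - c| = int_B |f - f_Pi|.  The resulting set
   {f_Pi > t} is a union of cells, so it lies in sigma(Pi); summing over the
   cells gives EM*(t) <= EM*_sigma(Pi)(t) + ||f - f_Pi||_1. *)

Lemma lee_fin_add_abs_sub {R : realDomainType} (x : R) (c : \bar R) :
  (0 <= c -> x%:E <= c + `|x%:E - c|)%E.
Proof.
case: c => [r||] //= r0; last by rewrite leey.
by rewrite -EFinD lee_fin; have := ler_norm (x - r); lra.
Qed.

Lemma leeDB_swap {R : realDomainType} (a b c d e : \bar R) :
  a \is a fin_num -> c \is a fin_num -> e \is a fin_num -> (0 <= b)%E ->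
  (0 <= d)%E -> (a + b <= c + d + e -> a - d <= c - b + e)%E.
Proof.
case: a => [a||] //; case: c => [c||] //; case: e => [e||] //.
case: d => [r||] //; last by move=> *; rewrite addeNy leNye.
by case: b => [s||] //; rewrite -?EFinN -!EFinD !lee_fin => *; lra.
Qed.

Section density.
Context {R : realType} {d : nat}.
Variable leb : {measure set (d.-tuple R) -> \bar R}.
Variable f : d.-tuple R -> R.
Hypothesis mf : measurable_fun setT f.
Hypothesis f_ge0 : forall x, 0 <= f x.
Local Open Scope ereal_scope.

Local Notation F := (distr_of leb f).

Definition average (B : set (d.-tuple R)) : \bar R := (leb B)^-1 * F B.

Lemma measurable_EFin_density {D : set (d.-tuple R)} :
  measurable_fun D (EFin \o f).
Proof. by apply/measurable_EFinP; apply: measurable_funS mf. Qed.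

Lemma measurable_abs_deviation {D : set (d.-tuple R)} (c : \bar R) :
  measurable_fun D (fun x => `|(f x)%:E - c|).
Proof.
apply: (measurableT_comp (f := abse)) => //.
by apply: emeasurable_funB => //; exact: measurable_EFin_density.
Qed.

Lemma distr_of_ge0 A : 0 <= F A.
Proof. by apply: integral_ge0 => x _; rewrite lee_fin. Qed.

Lemma average_ge0 B : 0 <= average B.
Proof. by apply: mule_ge0; [rewrite inve_ge0 | exact: distr_of_ge0]. Qed.

Lemma le_distr_of [A B] : measurable A -> measurable B -> A `<=` B -> F A <= F B.
Proof.
move=> mA mB AB; apply: ge0_subset_integral => //.
  exact: measurable_EFin_density.
by move=> x _; rewrite lee_fin.
Qed.

(* Integrate the pointwise bound [f <= c + |f - c|] over [A]. *)
Lemma distr_of_le_mass_deviation [A B] [c : \bar R] :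
  measurable A -> measurable B -> A `<=` B -> 0 <= c ->
  F A <= c * leb A + \int[leb]_(x in B) `|(f x)%:E - c|.
Proof.
move=> mA mB AB c0.
apply: (@le_trans _ _ (\int[leb]_(x in A) (c + `|(f x)%:E - c|))).
  apply: ge0_le_integral => //; first by move=> x _; rewrite lee_fin.
  - exact: measurable_EFin_density.
  - exact: emeasurable_funD (measurable_cst c) (measurable_abs_deviation c).
  - by move=> x _; exact: lee_fin_add_abs_sub.
rewrite ge0_integralD //; last exact: measurable_abs_deviation.
rewrite integral_cst //; apply: leeD2l.
by apply: ge0_subset_integral => //; exact: measurable_abs_deviation.
Qed.

Lemma average_gt_measure_fin_gt0 [B] [t : R] : measurable B -> (0 <= t)%R ->
  t%:E < average B -> leb B \is a fin_num /\ 0 < leb B.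
Proof.
move=> mB t0; rewrite /average.
have [lB0|lB_neq0] := eqVneq (leb B) 0.
  rewrite /distr_of null_set_integral //; last exact: measurable_EFin_density.
  by rewrite mule0 ltNge lee_fin t0.
have : 0 <= leb B by [].
case: (leb B) lB_neq0 => [l||] //= l_neq0 l0.
  by split => //; rewrite lt0e l_neq0.
by rewrite invey mul0e ltNge lee_fin t0.
Qed.

(* With c = average B we have F A <= c Leb A + deviation and F B = c Leb B,
   so the claim reduces to (c - t) (Leb B - Leb A) >= 0. *)
Lemma excess_le_cell A B (t : R) : measurable A -> measurable B ->
  A `<=` B -> F B \is a fin_num -> (0 <= t)%R -> t%:E < average B ->
  F A + t%:E * leb B <=
  F B + t%:E * leb A + \int[leb]_(x in B) `|(f x)%:E - average B|.
Proof.
move=> mA mB AB FB_fin t0 t_lt.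
have [lB_fin lB_gt0] := average_gt_measure_fin_gt0 mB t0 t_lt.
have lA_le : leb A <= leb B by apply: le_measure; rewrite ?inE.
have lA_fin : leb A \is a fin_num.
  by rewrite ge0_fin_numE // (le_lt_trans lA_le) // ltey_eq lB_fin.
have FA_fin : F A \is a fin_num.
  rewrite ge0_fin_numE ?distr_of_ge0 //.
  by rewrite (le_lt_trans (le_distr_of mA mB AB)) // ltey_eq FB_fin.
have FA_le := distr_of_le_mass_deviation mA mB AB (average_ge0 B).
set E := \int[leb]_(x in B) _ in FA_le *.
have [E_oo|E_fin] : E = +oo \/ E \is a fin_num.
  have : 0 <= E by apply: integral_ge0.
  by case: (E) => [e||]; [right|left|].
  rewrite E_oo addey ?leey // gt_eqF // (lt_le_trans ltNy0) //.
  by rewrite adde_ge0 ?distr_of_ge0 ?mule_ge0 ?lee_fin.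
move: FA_le t_lt lA_le lB_gt0; rewrite /average.
rewrite -[F A]fineK // -[leb A]fineK // -[F B]fineK // -[leb B]fineK // -[E]fineK //.
move: (fine (F A)) (fine (leb A)) (fine (F B)) (fine (leb B)) (fine E) => a m p l e.
rewrite !lte_fin => + + + l_gt0.
rewrite inver gt_eqF // -!EFinM -!EFinD !lee_fin lte_fin => FA_le t_lt m_le.
have : (0 <= (l^-1 * p - t) * (l - m))%R by apply: mulr_ge0; lra.
have -> : p = (l^-1 * p * l)%R by rewrite mulrAC mulVf ?gt_eqF // mul1r.
nra.
Qed.

Lemma distr_of_bigcup (Q : nat -> set (d.-tuple R)) :
  (forall i, measurable (Q i)) -> trivIset setT Q ->
  F (\bigcup_i Q i) = \sum_(i <oo) F (Q i).
Proof.
move=> mQ trivQ; rewrite /distr_of ge0_integral_bigcup //.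
  exact: measurable_EFin_density.
by move=> x _; rewrite lee_fin.
Qed.

Lemma EMstar_class_ge0 C t : C set0 -> 0 <= EMstar_class leb f C t.
Proof.
move=> C0; apply: le_trans (ereal_sup_ubound _); last by exists set0.
by rewrite /distr_of integral_set0 measure0 mule0 sube0.
Qed.

Lemma EMstar_class_le_distr [C] [D : set (d.-tuple R)] [t : R] :
  measurable D -> (forall A, C A -> measurable A /\ A `<=` D) -> (0 <= t)%R ->
  EMstar_class leb f C t <= F D.
Proof.
move=> mD CD t0; apply: ge_ereal_sup => _ [A /CD[mA AD] <-].
apply: le_trans (le_distr_of mA mD AD).
rewrite -[leRHS]adde0; apply: leeD2l.
by rewrite oppe_le0 mule_ge0 ?lee_fin.
Qed.

Lemma le_EMstar_class C1 C2 t : C1 `<=` C2 ->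
  EMstar_class leb f C1 t <= EMstar_class leb f C2 t.
Proof. by move=> C12; apply/ereal_sup_le/image_subset. Qed.

Section partition.
Variable P : nat -> set (d.-tuple R).
Hypothesis mP : forall i, measurable (P i).
Hypothesis trivP : trivIset setT P.

Local Notation X := (\bigcup_i P i).

Lemma f_Pi_cell [j x] : P j x -> f_Pi leb f P x = average (P j).
Proof.
move=> Pjx; rewrite /f_Pi (@nneseriesD1 _ _ j) //; last first.
  by move=> i _; rewrite mule_ge0 ?lee_fin //; exact: average_ge0.
rewrite indicE mem_set // mul1e eseries0 ?adde0 // => i _ /= ij.
rewrite indicE memNset ?mul0e // => Pix.
by move/eqP: ij; apply; apply: trivP => //; exists x.
Qed.

Lemma L1_dist_cells : L1_dist leb X f P =
  \sum_(i <oo) \int[leb]_(x in P i) `|(f x)%:E - average (P i)|.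
Proof.
have mdev : measurable_fun X (fun x => `|(f x)%:E - f_Pi leb f P x|).
  apply/measurable_fun_bigcup => // i.
  apply: eq_measurable_fun (measurable_abs_deviation (average (P i))).
  by move=> x; rewrite inE => Pix; rewrite (f_Pi_cell Pix).
rewrite /L1_dist ge0_integral_bigcup //.
apply: eq_eseriesr => i _; apply: eq_integral => x; rewrite inE => Pix.
by rewrite (f_Pi_cell Pix).
Qed.

Definition superlevel_cell (t : R) i : set (d.-tuple R) :=
  if t%:E < average (P i) then P i else set0.

Definition fPi_superlevel (t : R) := \bigcup_i superlevel_cell t i.

Lemma fPi_superlevel_sigma (D : set (d.-tuple R)) t :
  <<s D, range P >> (fPi_superlevel t).
Proof.
apply: sigma_algebra_bigcup => i; rewrite /superlevel_cell.
case: ifP => _; last exact: sigma_algebra0.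
by apply: sub_sigma_algebra; exists i.
Qed.

Let measurable_superlevel_cell t i : measurable (superlevel_cell t i).
Proof. by rewrite /superlevel_cell; case: ifP. Qed.

Let trivIset_superlevel_cell t : trivIset setT (superlevel_cell t).
Proof.
have -> : superlevel_cell t =
    (fun i => P i `&` if t%:E < average (P i) then setT else set0).
  apply/funext => i; rewrite /superlevel_cell.
  by case: ifP; rewrite ?setIT ?setI0.
exact: trivIset_setIr.
Qed.

Lemma excess_le_superlevel_cell Om t i : measurable Om ->
  F (P i) \is a fin_num -> (0 <= t)%R ->
  F (Om `&` P i) + t%:E * leb (superlevel_cell t i) <=
  F (superlevel_cell t i) + t%:E * leb (Om `&` P i) +
  \int[leb]_(x in P i) `|(f x)%:E - average (P i)|.
Proof.
move=> mOm FP_fin t0; rewrite /superlevel_cell.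
have mOmP := measurableI _ _ mOm (mP i).
case: ifPn => [t_lt|]; first exact: excess_le_cell.
rewrite -leNgt measure0 mule0 adde0 /distr_of integral_set0 add0e => avg_le.
have := distr_of_le_mass_deviation mOmP (mP i) (@subIsetr _ _ _) (average_ge0 (P i)).
move/le_trans; apply.
by rewrite leeD2r // lee_wpmul2r.
Qed.

Lemma excess_le_fPi_superlevel Om t : measurable Om -> Om `<=` X ->
  (forall i, F (P i) \is a fin_num) -> (0 <= t)%R ->
  F Om + t%:E * leb (fPi_superlevel t) <=
  F (fPi_superlevel t) + t%:E * leb Om + L1_dist leb X f P.
Proof.
move=> mOm OmX FP_fin t0.
have mOmP i : measurable (Om `&` P i) by apply: measurableI.
have trivOmP : trivIset setT (fun i => Om `&` P i) by exact: trivIset_setIl.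
have OmE : Om = \bigcup_i (Om `&` P i) by rewrite -setI_bigcupr setIidl.
have t0E : 0 <= t%:E by rewrite lee_fin.
rewrite L1_dist_cells [in F Om]OmE [in leb Om]OmE /fPi_superlevel.
rewrite !distr_of_bigcup // !measure_semi_bigcup -?OmE //; last first.
  exact: bigcupT_measurable.
have F0 A : 0 <= F A := distr_of_ge0 A.
have dev0 i : 0 <= \int[leb]_(x in P i) `|(f x)%:E - average (P i)|.
  exact: integral_ge0.
rewrite -!nneseriesZl // -!nneseriesD //; last 3 first.
- by move=> i *; rewrite adde_ge0 ?mule_ge0.
- by move=> i *; rewrite mule_ge0.
- by move=> i *; rewrite mule_ge0.
apply: lee_nneseries => [i _|i _]; first by rewrite adde_ge0 ?mule_ge0.
exact: excess_le_superlevel_cell.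
Qed.

Lemma EMstar_le_sigma_add_L1 [t] : (0 <= t)%R -> F X \is a fin_num ->
  EMstar leb X f t <= EMstar_class leb f <<s X, range P >> t + L1_dist leb X f P.
Proof.
move=> t0 FX_fin.
have mX : measurable X by exact: bigcupT_measurable.
have F_fin A : measurable A -> A `<=` X -> F A \is a fin_num.
  move=> mA AX; rewrite ge0_fin_numE ?distr_of_ge0 //.
  by rewrite (le_lt_trans (le_distr_of mA mX AX)) // ltey_eq FX_fin.
have L1_ge0 : 0 <= L1_dist leb X f P by apply: integral_ge0.
have [L1_oo|L1_fin] : L1_dist leb X f P = +oo \/ L1_dist leb X f P \is a fin_num.
  by move: L1_ge0; case: (L1_dist _ _ _ _) => [e||]; [right|left|].
  rewrite L1_oo addey ?leey // gt_eqF // (lt_le_trans ltNy0) //.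
  by apply: EMstar_class_ge0; exact: sigma_algebra0.
apply: ge_ereal_sup => _ [Om [mOm OmX] <-].
have mL : measurable (fPi_superlevel t) by exact: bigcupT_measurable.
have LX : fPi_superlevel t `<=` X.
  apply: bigcup_sub => i _; rewrite /superlevel_cell.
  by case: ifP => _ //; exact: bigcup_sup.
apply: (@le_trans _ _ (F (fPi_superlevel t) - t%:E * leb (fPi_superlevel t)
                       + L1_dist leb X f P)); last first.
  rewrite leeD2r // ereal_sup_ubound //.
  by exists (fPi_superlevel t) => //; exact: fPi_superlevel_sigma.
apply: leeDB_swap => //.
- exact: F_fin.
- exact: F_fin.
- by rewrite mule_ge0 ?lee_fin.
- by rewrite mule_ge0 ?lee_fin.
- by apply: excess_le_fPi_superlevel => // i; apply: F_fin => //; exact: bigcup_sup.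
Qed.

Lemma EMstar_class_gap C t : (0 <= t)%R -> F X \is a fin_num ->
  <<s X, range P >> `<=` C -> (forall A, C A -> measurable A /\ A `<=` X) ->
  0 <= EMstar leb X f t - EMstar_class leb f C t <= L1_dist leb X f P.
Proof.
move=> t0 FX_fin sigmaC CX.
have mX : measurable X by exact: bigcupT_measurable.
have C_fin : EMstar_class leb f C t \is a fin_num.
  rewrite ge0_fin_numE; last by apply/EMstar_class_ge0/sigmaC; exact: sigma_algebra0.
  by rewrite (le_lt_trans (EMstar_class_le_distr mX CX t0)) // ltey_eq FX_fin.
apply/andP; split.
  by rewrite sube_ge0 ?C_fin ?orbT //; apply: le_EMstar_class.
rewrite leeBlDr // addeC.
apply: le_trans (EMstar_le_sigma_add_L1 t0 FX_fin) _.
by rewrite leeD2r //; apply: le_EMstar_class.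
Qed.

End partition.

End density.

Theorem lemma3 (R : realType) (d : nat)
  (leb : {measure set (d.-tuple R) -> \bar R})
  (Hleb : is_lebesgue_measure leb)
  (X : set (d.-tuple R)) (mX : measurable X)
  (f : d.-tuple R -> R)
  (mf : measurable_fun setT f) (f_ge0 : forall x, 0 <= f x)
  (f_int1 : (\int[leb]_(x in setT) (f x)%:E = 1)%E)
  (f_X1 : (\int[leb]_(x in X) (f x)%:E = 1)%E)
  (G : set (set (d.-tuple R)))
  (HG : forall A, G A -> measurable A /\ A `<=` X)
  (P : nat -> set (d.-tuple R))
  (HPG : forall i, G (P i))
  (HPdisj : forall i j, i <> j -> P i `&` P j = set0)
  (HPcover : \bigcup_i P i = X)
  (HsigmaG : <<s X, range P >> `<=` G) :
  (forall t : R, 0 <= t -> (t%:E <= sup_norm X f)%E ->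
     (0 <= EMstar leb X f t - EMstar_class leb f (<<s X, range P >>) t
        <= L1_dist leb X f P)%E) /\
  (forall t : R, 0 <= t -> (t%:E <= sup_norm X f)%E ->
     (0 <= EMstar leb X f t - EMstar_class leb f G t
        <= L1_dist leb X f P)%E).
Proof.
have mP i : measurable (P i) by case: (HG _ (HPG i)).
have trivP : trivIset setT P.
  move=> i j _ _ [x [Pix Pjx]]; apply: contrapT => ij.
  by have : (P i `&` P j) x by []; rewrite HPdisj.
subst X.
have FX_fin : distr_of leb f (\bigcup_i P i) \is a fin_num by rewrite /distr_of f_X1.
have sigmaX A : <<s \bigcup_i P i, range P >> A -> measurable A /\ A `<=` \bigcup_i P i.
  by move/HsigmaG/HG.
by split=> t t0 _; apply: EMstar_class_gap.
Qed.
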